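(* There exists $N$ such that for every integer $n\ge N$ there is a tree $T$ on $n$ vertices with the following property: for every (deterministic) strategy of the cat in the Cat and Mouse game on $T$, there is a sequence of mouse positions $(m_i)_{i\ge1}$ such that $\mathrm{rad}_T(M_i)>\sqrt{n}/12$ for every $i\ge1$; that is, the mouse avoids being localised up to distance $\sqrt{n}/12$ forever.
   Context: The Cat and Mouse game is played on a simple, undirected, connected graph $G$ with $n$ vertices, in discrete time steps $i=1,2,\dots$. The mouse occupies vertices $m_1,m_2,\dots$, where for $i\ge2$, $m_i$ equals $m_{i-1}$ or is a neighbour of $m_{i-1}$. At time $i$ the cat chooses (tests) an arbitrary vertex $c_i$. For $i\ge2$ the cat is told $b_i=1$ if $d(c_i,m_i)\le d(c_{i-1},m_{i-1})$ and $b_i=0$ otherwise, where $d$ is the graph distance. A strategy of the cat is a triple $(c_1,c_2,f)$ with $c_1,c_2\in V(G)$ and $f:\bigcup_{i\in\mathbb N}\{0,1\}^i\to V(G)$, meaning $c_i=f(b_2,\dots,b_{i-1})$ for $i\ge3$; it is fixed in advance and deterministic, and the mouse knows it (so the mouse's sequence may depend on it). $M_i$ is the set of vertices $v$ for which there exist $\tilde m_1,\dots,\tilde m_i$ with $\tilde m_i=v$, $\tilde m_j$ in the closed neighbourhood of $\tilde m_{j-1}$ for $2\le j\le i$, and for each $2\le j\le i$: $d(c_j,\tilde m_j)\le d(c_{j-1},\tilde m_{j-1})$ iff $b_j=1$. The radius of $W\subseteq V(G)$ is $\mathrm{rad}_G(W)=\min_{v\in V(G)}\max_{w\in W} d(v,w)$.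 *)

From mathcomp Require Import all_boot.
From mathcomp Require Import boolp.
From Stdlib Require Import Reals.

Set Implicit Arguments.
Unset Strict Implicit.
Unset Printing Implicit Defensive.

Section Game.
Variable T : finType.
Variable e : rel T.

Definition simple_graph := symmetric e /\ irreflexive e.
Definition connected_graph := forall x y : T, connect e x y.
Definition acyclic := ~ exists s : seq T, [&& uniq s, 2 < size s & cycle e s].
Definition is_tree := [/\ simple_graph, connected_graph & acyclic].

(* graph distance: least k such that there is an e-walk of length k from x to y
   (returns #|T| if no such walk, which cannot happen in a connected graph) *)
Definition dist (x y : T) : nat :=
  find (fun k => [exists p : k.-tuple T, path e x p && (last x p == y)])
       (iota 0 #|T|).

(* radius of W : min over v of max over w in W of d(v,w);
   #|T| is a harmless neutral element since dist <= #|T| *)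
Definition rad (W : {set T}) : nat :=
  \big[minn/#|T|]_(v : T) \max_(w in W) dist v w.

Definition mouse_walk (m : nat -> T) :=
  forall i, 2 <= i -> m i = m i.-1 \/ e (m i.-1) (m i).

Variables (c1 c2 : T) (f : seq bool -> T) (m : nat -> T).

(* state at time i (i >= 1): (bits [b_2; ...; b_i], c_i) *)
Fixpoint state (i : nat) : seq bool * T :=
  match i with
  | 0 => ([::], c1)
  | j.+1 =>
      if j == 0 then ([::], c1) else
      let: (b, c) := state j in
      let c' := if j.+1 == 2 then c2 else f b in
      (rcons b (dist c' (m j.+1) <= dist c (m j)), c')
  end.

Definition cpos (i : nat) : T := (state i).2.
Definition bit (i : nat) : bool := dist (cpos i) (m i) <= dist (cpos i.-1) (m i.-1).

Definition Mpred (i : nat) (v : T) : Prop :=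
  exists tm : nat -> T,
    [/\ tm i = v,
        (forall j, 2 <= j <= i -> tm j = tm j.-1 \/ e (tm j.-1) (tm j)) &
        (forall j, 2 <= j <= i ->
           (dist (cpos j) (tm j) <= dist (cpos j.-1) (tm j.-1)) = bit j)].

Definition Mset (i : nat) : {set T} := [set v | `[< Mpred i v >]].

End Game.

From Pilot Require Import Defs.
From mathcomp Require Import all_boot.
From mathcomp Require Import boolp.
From Stdlib Require Import Reals Lra.
From mathcomp Require Import zify.

Set Implicit Arguments.
Unset Strict Implicit.
Unset Printing Implicit Defensive.

(* The tree is a spider with K = D + 2 legs, where D is about sqrt n / 12.  The mouse
   answers each test according to the depths of the last two tests only, and records
   for every leg l a reach h l: the centre and the first h l vertices of every leg are
   consistent with all answers so far, i.e. lie in M_i.  After each answer either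
   nothing changes (the answer is the one a motionless mouse would give) or one leg is
   cleared (h l := 0) and all others grow by one, since each of their candidates may
   have stepped one vertex outwards.  So at any time at most j legs have reach below j,
   and for every vertex v some other leg still has reach D: its vertex at depth D is a
   candidate at distance at least D from v.  Every candidate has a consistent history,
   and since the tree is finite these histories (Koenig's lemma) yield one infinite
   mouse walk which produces exactly the answers of the strategy. *)

Lemma find_iota (a : pred nat) n k : k < n -> a k -> (forall j, j < k -> ~~ a j) ->
  find a (iota 0 n) = k.
Proof.
move=> lt_kn ak below_k; rewrite -(subnKC (ltnW lt_kn)) iotaD find_cat size_iota.
have -> : has a (iota 0 k) = false.
  by apply/hasP => -[j]; rewrite mem_iota add0n => /below_k /negP.
by rewrite add0n -(subnSK lt_kn) /= ak addn0.
Qed.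

Section GraphDistance.
Variables (T : finType) (e : rel T) (d : T -> T -> nat).
Hypothesis d_eq0 : forall x y, (d x y == 0) = (x == y).
Hypothesis d_edge : forall x y z, e y z -> d x z <= (d x y).+1.
Hypothesis d_descent : forall x y, 0 < d x y -> exists2 x', e x x' & d x' y = (d x y).-1.

Lemma descent_walk x y :
  exists2 p : seq T, size p = d x y & path e x p && (last x p == y).
Proof.
have [k dxy] : exists k, d x y = k by exists (d x y).
elim: k x dxy => [|k IH] x dxy; rewrite dxy.
  by exists [::]; rewrite //= -d_eq0 dxy.
have [x' exx' dx'y] := d_descent (ltac:(lia) : 0 < d x y).
rewrite dxy /= in dx'y; have [p size_p /andP [px' lastp]] := IH x' dx'y.
by exists (x' :: p); rewrite /= ?size_p ?dx'y ?exx' ?px'.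
Qed.

Lemma walk_length_ge x p : path e x p -> d x (last x p) <= size p.
Proof.
suff walk_ge y : path e y p -> d x (last y p) <= d x y + size p.
  by move/walk_ge; move/eqP: (d_eq0 x x); rewrite eqxx => ->.
elim: p y => [|z p IH] y /=; first by rewrite addn0.
by case/andP=> /(d_edge x) eyz /IH; lia.
Qed.

Lemma descent_levels x y k : k <= d x y -> exists z, d z y = k.
Proof.
have [m dxy] : exists m, d x y = m by exists (d x y).
elim: m x dxy => [|m IH] x dxy le_k; first by exists x; lia.
have [->|ne_k] := eqVneq k m.+1; first by exists x.
have [x' _ dx'y] := d_descent (ltac:(lia) : 0 < d x y).
by apply: (IH x'); rewrite dx'y dxy //=; lia.
Qed.

Lemma d_lt_card x y : d x y < #|T|.
Proof.
pose level (k : 'I_(d x y).+1) := odflt x [pick z | d z y == k].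
have levelE k : d (level k) y = k.
  rewrite /level; case: pickP => [z /eqP //|none].
  have [z dzy] := descent_levels (ltn_ord k : k <= d x y).
  by move: (none z); rewrite dzy eqxx.
have level_inj : injective level.
  by move=> k k' /(congr1 (d^~ y)); rewrite !levelE => /val_inj.
by have := @leq_card _ _ level level_inj; rewrite card_ord.
Qed.

Lemma dist_eq_descent x y : Defs.dist e x y = d x y.
Proof.
apply: find_iota; first exact: d_lt_card.
  have [p size_p walk_p] := descent_walk x y.
  by apply/existsP; exists (Tuple (introT eqP size_p)).
move=> j lt_j; apply/existsP => -[p /andP [walk_p /eqP last_p]].
by have := walk_length_ge walk_p; rewrite last_p size_tuple; lia.
Qed.

End GraphDistance.

Lemma acyclic_ranked (T : finType) (e : rel T) (rank : T -> nat) :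
  symmetric e ->
  (forall u v, e u v -> rank u != rank v) ->
  (forall x y z, e x y -> e x z -> rank y < rank x -> rank z < rank x -> y = z) ->
  acyclic e.
Proof.
move=> e_sym e_rank lower_uniq [s /and3P [uniq_s size_s cycle_s]].
have [s0 s0_s] : exists s0, s0 \in s.
  by case: s size_s {uniq_s cycle_s} => // s0 s _; exists s0; exact: mem_head.
case: (arg_maxnP rank s0_s) => x x_s x_max.
case: (rot_to x_s) => i [|y r] rot_s.
  by move: size_s; rewrite -(size_rot i) rot_s.
move: uniq_s cycle_s size_s; rewrite -(rot_uniq i) -(rot_cycle i) -(size_rot i) rot_s.
case: r rot_s => [|y' r] rot_s //= /and4P [_ y_notin _ _] /and3P [exy _].
rewrite rcons_path => /andP [_ ezx] _.
set z := last y' r in ezx.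
have in_s w : w \in [:: x, y, y' & r] -> w \in s by rewrite -rot_s mem_rot.
have lower w : w \in [:: x, y, y' & r] -> e x w -> rank w < rank x.
  by move=> w_in exw; rewrite ltn_neqAle eq_sym e_rank //=; apply: x_max; exact: in_s.
have z_in : z \in y' :: r by exact: mem_last.
have exz : e x z by rewrite e_sym.
move: y_notin; rewrite (lower_uniq x y z) ?z_in // lower //.
  by rewrite !inE eqxx orbT.
by rewrite inE in_cons z_in !orbT.
Qed.

Lemma exists_forall_antitone (T : finType) (Q : T -> nat -> Prop) :
  (forall v k k', k <= k' -> Q v k' -> Q v k) ->
  (forall k, exists v, Q v k) -> exists v, forall k, Q v k.
Proof.
move=> Q_anti Q_ex; apply: contrapT => /forallNP none.
have [bound boundP] := choice (fun v => proj2 (existsNP _) (none v)).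
have [v Qv] := Q_ex (\max_v bound v).
by apply: (boundP v); apply: Q_anti Qv; exact: leq_bigmax.
Qed.

Lemma infinite_walk (T : finType) (R : nat -> T -> T -> Prop) :
  (forall k, exists w : nat -> T, forall j, j < k -> R j (w j) (w j.+1)) ->
  exists w : nat -> T, forall j, R j (w j) (w j.+1).
Proof.
move=> walks.
pose walk_from i v k := exists w : nat -> T,
  w i = v /\ forall j, i <= j < k -> R j (w j) (w j.+1).
have walk_from_anti i v k k' : k <= k' -> walk_from i v k' -> walk_from i v k.
  by move=> le_k [w [wi Rw]]; exists w; split=> // j /andP [le_ij lt_jk]; apply: Rw; lia.
have [v0 v0_ext] : exists v, forall k, walk_from 0 v k.
  apply: exists_forall_antitone => [v|k]; first exact: walk_from_anti.
  have [w Rw] := walks k.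
  by exists (w 0), w; split=> // j /andP [_ /Rw].
have extend i v : (forall k, walk_from i v k) ->
    exists v', R i v v' /\ forall k, walk_from i.+1 v' k.
  move=> v_ext.
  suff [v' v'_ext] : exists v', forall k, R i v v' /\ walk_from i.+1 v' k.
    by exists v'; split=> [|k]; [case: (v'_ext 0)|case: (v'_ext k)].
  apply: exists_forall_antitone => [v' k k' le_k [Rvv' ext]|k].
    by split=> //; exact: walk_from_anti ext.
  have [w [wi Rw]] := v_ext (maxn k i.+1).
  exists (w i.+1); split; first by rewrite -wi; apply: Rw; lia.
  by exists w; split=> // j /andP [lt_ij lt_jk]; apply: Rw; lia.
have step (iv : nat * T) : exists v', (forall k, walk_from iv.1 iv.2 k) ->
    R iv.1 iv.2 v' /\ forall k, walk_from iv.1.+1 v' k.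
  case: (pselect (forall k, walk_from iv.1 iv.2 k)) => [/extend [v' ?]|no_ext].
    by exists v'.
  by exists iv.2.
have [next nextP] := choice step.
pose fix w i := if i is i'.+1 then next (i', w i') else v0.
have w_ext i : forall k, walk_from i (w i) k.
  by elim: i => [|i IH] //=; exact: (nextP (i, w i) IH).2.
by exists w => j; exact: (nextP (j, w j) (w_ext j)).1.
Qed.

Lemma rad_ge (T : finType) (e : rel T) (W : {set T}) D : D <= #|T| ->
  (forall v, exists2 w, w \in W & D <= Defs.dist e v w) -> D <= rad e W.
Proof.
move=> le_D far; apply: (big_ind (fun r => D <= r)) => // [r r'|v _].
  by rewrite leq_min => -> ->.
by have [w w_W le_Dw] := far v; apply: leq_trans le_Dw (leq_bigmax_cond _ w_W).
Qed.

Section Spider.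
Variable K : nat.
Hypothesis K_gt0 : 0 < K.

(* Vertex 0 is the centre; v > 0 lies on leg (v - 1) mod K at depth (v - 1) / K + 1,
   so the parent of v is v - K (truncated: 0 for the first vertices of the legs), and
   [spot l t] is the vertex at depth t on leg l.  [leg 0 = 0] is a junk value, harmless
   in [tdist] since [dep 0 = 0]. *)
Definition dep v := if v == 0 then 0 else (v.-1 %/ K).+1.
Definition leg v := v.-1 %% K.
Definition spot l t := (t.-1 * K + l).+1.
Definition child p c := (c != 0) && (c - K == p).
Definition adj u v := child u v || child v u.
Definition tdist u v :=
  if leg u == leg v then (dep u - dep v) + (dep v - dep u) else dep u + dep v.

Lemma dep_eq0 v : (dep v == 0) = (v == 0).
Proof. by rewrite /dep; case: (v =P 0). Qed.

Lemma dep0 : dep 0 = 0. Proof. by []. Qed.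

Lemma leg0 : leg 0 = 0. Proof. exact: mod0n. Qed.

Lemma leg_lt v : leg v < K. Proof. exact: ltn_pmod. Qed.

Lemma leg_spot l t : l < K -> leg (spot l t) = l.
Proof. by move=> lt_lK; rewrite /leg /spot /= modnMDl modn_small. Qed.

Lemma dep_spot l t : l < K -> 0 < t -> dep (spot l t) = t.
Proof. by move=> lt_lK; rewrite /dep /spot /= divnMDl // divn_small // addn0; case: t. Qed.

Lemma spot_leg_dep v : v != 0 -> spot (leg v) (dep v) = v.
Proof.
by move=> v_neq0; rewrite /spot /dep /leg (negPf v_neq0) /= -divn_eq prednK // lt0n.
Qed.

Lemma spotS l t : 0 < t -> spot l t.+1 = spot l t + K.
Proof. by case: t => // t _; rewrite /spot /= mulSn; lia. Qed.

Lemma leq_spot l t t' : t <= t' -> spot l t <= spot l t'.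
Proof. by move=> le_t; rewrite /spot ltnS leq_add2r leq_mul2r; apply/orP; right; lia. Qed.

Lemma child_sub c : c != 0 -> child (c - K) c.
Proof. by rewrite /child eqxx andbT. Qed.

Lemma child_add p : child p (p + K).
Proof. by rewrite /child addnK eqxx andbT -lt0n ltn_addl. Qed.

Lemma child0_spot l : l < K -> child 0 (spot l 1).
Proof. by move=> lt_lK; rewrite /child /spot /= mul0n add0n; apply/eqP; lia. Qed.

Lemma spot_leg_le v : v != 0 -> spot (leg v) 1 <= v.
Proof. by move=> v_neq0; rewrite -{2}(spot_leg_dep v_neq0) leq_spot // lt0n dep_eq0. Qed.

Lemma child_dep_leg p c : child p c -> dep c = (dep p).+1 /\ (p != 0 -> leg c = leg p).
Proof.
case/andP=> c_neq0 /eqP <-{p}; rewrite -(spot_leg_dep c_neq0).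
have : 0 < dep c by rewrite lt0n dep_eq0.
move: (leg_lt c); move: (leg c) (dep c) => l [//|[|t]] lt_lK _.
  by rewrite dep_spot // (_ : spot l 1 - K = 0) //; rewrite /spot /=; lia.
have -> : spot l t.+2 - K = spot l t.+1 by rewrite spotS ?addnK.
by rewrite !dep_spot ?leg_spot.
Qed.

Lemma child_dep p c : child p c -> dep c = (dep p).+1.
Proof. by case/child_dep_leg. Qed.

Lemma tdist_sym u v : tdist u v = tdist v u.
Proof. by rewrite /tdist eq_sym; case: ifP; lia. Qed.

Lemma tdist_le u v : tdist u v <= dep u + dep v.
Proof. by rewrite /tdist; case: ifP; lia. Qed.

Lemma tdist_other_leg u v : leg u != leg v -> tdist u v = dep u + dep v.
Proof. by rewrite /tdist => /negPf ->. Qed.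

Lemma tdist0r u : tdist u 0 = dep u.
Proof. by rewrite /tdist leg0 dep0; case: ifP; lia. Qed.

Lemma tdist_eq0 u v : (tdist u v == 0) = (u == v).
Proof.
apply/idP/eqP => [|->]; last by rewrite /tdist eqxx; lia.
rewrite /tdist; case: ifPn => [/eqP same_leg|other_leg] d0.
  have same_dep : dep u = dep v by lia.
  have [u0|u_neq0] := eqVneq u 0.
    by move: (dep_eq0 v); rewrite -same_dep u0 dep0 eqxx => /esym/eqP.
  have v_neq0 : v != 0 by rewrite -(dep_eq0 v) -same_dep dep_eq0.
  by rewrite -(spot_leg_dep u_neq0) -(spot_leg_dep v_neq0) same_leg same_dep.
have /andP [/eqP u0 /eqP v0] : (u == 0) && (v == 0).
  by rewrite -(dep_eq0 u) -(dep_eq0 v); apply/andP; split; apply/eqP; lia.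
by move: other_leg; rewrite u0 v0 eqxx.
Qed.

Lemma tdist_child x p c : child p c ->
  tdist x c <= (tdist x p).+1 /\ tdist x p <= (tdist x c).+1.
Proof.
move=> pc; have [dep_c leg_c] := child_dep_leg pc.
have [p0|p_neq0] := eqVneq p 0.
  by move: dep_c; rewrite p0 tdist0r dep0 /tdist => dep_c; case: ifP; lia.
by rewrite /tdist leg_c //; case: ifP; lia.
Qed.

Lemma tdist_child_off x p c : child p c -> leg x != leg c -> tdist x p = dep x + dep p.
Proof.
move=> pc other_leg; have [p0|p_neq0] := eqVneq p 0; first by rewrite p0 tdist0r dep0 addn0.
by rewrite tdist_other_leg // -(proj2 (child_dep_leg pc) p_neq0).
Qed.

Lemma tdist_descent x y : 0 < tdist x y ->
  exists2 x', adj x x' & (tdist x' y == (tdist x y).-1) && (x' <= maxn x y).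
Proof.
move=> d_pos; have [x0|x_neq0] := eqVneq x 0.
  have y_neq0 : y != 0 by apply: contraTneq d_pos => y0; rewrite x0 y0 tdist0r.
  have dep_y : 0 < dep y by rewrite lt0n dep_eq0.
  exists (spot (leg y) 1); first by rewrite /adj x0 child0_spot ?leg_lt.
  rewrite x0 (tdist_sym 0) tdist0r /tdist leg_spot ?leg_lt // eqxx dep_spot ?leg_lt //.
  by rewrite leq_max spot_leg_le ?orbT ?andbT //; apply/eqP; lia.
case: (boolP ((leg x == leg y) && (dep x < dep y))) => [/andP [/eqP same_leg lt_dep]|not_below].
  have [dep_xK leg_xK] := child_dep_leg (child_add x).
  have y_neq0 : y != 0 by rewrite -dep_eq0; lia.
  have le_y : x + K <= y.
    rewrite -(spot_leg_dep x_neq0) -spotS; last by rewrite lt0n dep_eq0.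
    by rewrite -(spot_leg_dep y_neq0) same_leg leq_spot.
  exists (x + K); first by rewrite /adj child_add.
  rewrite /tdist leg_xK // same_leg eqxx dep_xK leq_max le_y orbT andbT.
  by apply/eqP; lia.
have [dep_x leg_x] := child_dep_leg (child_sub x_neq0).
exists (x - K); first by rewrite /adj child_sub ?orbT.
rewrite leq_max leq_subr andbT.
have [p0|p_neq0] := eqVneq (x - K) 0.
  move: dep_x not_below d_pos; rewrite p0 dep0 (tdist_sym 0) tdist0r /tdist.
  by case: (leg x == leg y) => /= dep_x; lia.
by move: not_below d_pos; rewrite /tdist -(leg_x p_neq0) dep_x; case: (leg x == leg y) => /=; lia.
Qed.

(* The answer to the tests c, c' is 1 if c' is closer to the centre and 0 otherwise,
   and the leg of the test farther out (of c' on a tie) is cleared; except in the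
   "stall" case (equal depths, and c the centre or its leg without candidates), where
   the answer is 1 and nothing changes. *)
Definition reachable (h : nat -> nat) v := (v == 0) || (0 < dep v <= h (leg v)).
Definition stalls c c' (h : nat -> nat) := (dep c' == dep c) && ((c == 0) || (h (leg c) == 0)).
Definition answer c c' h := (dep c' < dep c) || stalls c c' h.
Definition cleared_leg c c' := if dep c' < dep c then leg c else leg c'.
Definition update c c' h : nat -> nat :=
  if stalls c c' h then h else fun l => if l == cleared_leg c c' then 0 else (h l).+1.

Lemma stall_answer c c' h w : stalls c c' h -> reachable h w -> tdist c' w <= tdist c w.
Proof.
case/andP=> /eqP same_dep /orP [/eqP c0|/eqP h0].
  have /eqP c'0 : c' == 0 by rewrite -dep_eq0 same_dep c0.
  by rewrite c0 c'0.
case/orP=> [/eqP ->|/andP [w_pos w_le]]; first by rewrite !tdist0r same_dep.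
have other_leg : leg c != leg w by apply: contraTneq w_le => <-; rewrite h0 -ltnNge.
by rewrite (tdist_other_leg other_leg) -same_dep tdist_le.
Qed.

Lemma reachable_parent h p w : child p w -> dep w <= (h (leg w)).+1 -> reachable h p.
Proof.
move=> pw w_le; have [p0|p_neq0] := eqVneq p 0; first by rewrite /reachable p0.
have [dep_w leg_w] := child_dep_leg pw.
by rewrite /reachable (negPf p_neq0) lt0n dep_eq0 p_neq0 -(leg_w p_neq0) -ltnS -dep_w.
Qed.

Lemma update_reachable c c' h w : ~~ stalls c c' h -> reachable (update c c' h) w ->
  w != 0 -> leg w != cleared_leg c c' /\ reachable h (w - K).
Proof.
rewrite /update /reachable => /negPf -> /orP [/eqP ->//|/andP [w_pos]].
case: eqP => [_|other_leg w_le _]; first by rewrite leqNgt w_pos.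
by split; [apply/eqP|apply: reachable_parent w_le; rewrite child_sub // -dep_eq0 -lt0n].
Qed.

Lemma outward_answer c c' h p w : ~~ stalls c c' h -> child p w ->
  leg w != cleared_leg c c' -> (tdist c' w <= tdist c p) = answer c c' h.
Proof.
rewrite /answer /cleared_leg => /negPf -> pw; have dep_w := child_dep pw.
case: ltnP => [lt_dep|ge_dep] other_leg; rewrite orbF.
  by rewrite (tdist_child_off (x := c) pw) 1?eq_sym // (leq_trans (tdist_le _ _)) //; lia.
rewrite tdist_other_leg 1?eq_sym //.
by apply/negbTE; rewrite -ltnNge (leq_ltn_trans (tdist_le _ _)) //; lia.
Qed.

Lemma root_back c c' h : ~~ stalls c c' h ->
  exists u, [/\ u <= c, reachable h u, u = 0 \/ adj u 0 &
                (tdist c' 0 <= tdist c u) = answer c c' h].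
Proof.
rewrite /answer => /negPf not_stall; rewrite not_stall orbF.
have [same_dep|other_dep] := eqVneq (dep c') (dep c); last first.
  exists 0; split; rewrite ?tdist0r //; first by left.
  by rewrite leq_eqVlt (negPf other_dep).
move: not_stall; rewrite /stalls same_dep eqxx /= => /negbT.
rewrite negb_or => /andP [c_neq0 h_pos]; have dep_c : 0 < dep c by rewrite lt0n dep_eq0.
exists (spot (leg c) 1); split.
- exact: spot_leg_le.
- by rewrite /reachable leg_spot ?leg_lt // dep_spot ?leg_lt //= lt0n h_pos.
- by right; rewrite /adj child0_spot ?leg_lt ?orbT.
rewrite tdist0r /tdist leg_spot ?leg_lt // eqxx dep_spot ?leg_lt // same_dep.
by rewrite ltnn; apply/negbTE; rewrite -ltnNge; lia.
Qed.

Lemma reachable_back c c' h w : reachable (update c c' h) w ->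
  exists u, [/\ u <= maxn c w, reachable h u, u = w \/ adj u w &
                (tdist c' w <= tdist c u) = answer c c' h].
Proof.
case: (boolP (stalls c c' h)) => [stall|not_stall] w_reach.
  move: w_reach; rewrite /update stall => w_reach.
  exists w; split; [exact: leq_maxr|done|by left|].
  by rewrite /answer stall orbT (stall_answer stall).
have [w0|w_neq0] := eqVneq w 0.
  have [u [le_u u_reach adj_u u_ans]] := root_back not_stall.
  by exists u; rewrite w0; split; rewrite ?leq_max ?le_u.
have [off_leg p_reach] := update_reachable not_stall w_reach w_neq0.
exists (w - K); split => //.
- by rewrite leq_max leq_subr orbT.
- by right; rewrite /adj child_sub ?orbT.
- exact: outward_answer (child_sub w_neq0) off_leg.
Qed.

Definition few_short_legs (h : nat -> nat) := forall j, #|[set l : 'I_K | h l < j]| <= j.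

Lemma card_val_le1 X : #|[set l : 'I_K | val l == X]| <= 1.
Proof. by apply/card_le1_eqP => l l'; rewrite !inE => /eqP <- /eqP /val_inj. Qed.

Lemma few_short_legs_const : few_short_legs (fun=> K).
Proof.
move=> j; case: (leqP j K) => [le_jK|lt_Kj].
  by rewrite (_ : [set _ | _] = set0) ?cards0 //; apply/setP => l; rewrite !inE ltnNge le_jK.
by apply: leq_trans (max_card _) _; rewrite card_ord ltnW.
Qed.

Lemma few_short_legs_update c c' h : few_short_legs h -> few_short_legs (update c c' h).
Proof.
rewrite /update; case: ifP => // _ short [|j].
  by rewrite leqn0 cards_eq0; apply/eqP/setP => l; rewrite !inE.
set X := cleared_leg c c'.
have sub : [set l : 'I_K | (if val l == X then 0 else (h l).+1) < j.+1]
    \subset [set l : 'I_K | val l == X] :|: [set l : 'I_K | h l < j].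
  by apply/subsetP => l; rewrite !inE; case: eqP.
apply: leq_trans (subset_leq_card sub) _; apply: leq_trans (leq_card_setU _ _) _.
by rewrite -add1n leq_add ?card_val_le1.
Qed.

Lemma long_leg h D p : few_short_legs h -> D.+2 <= K ->
  exists l : 'I_K, (val l != p) && (D <= h l).
Proof.
move=> short le_DK; case: (pickP (fun l : 'I_K => (val l != p) && (D <= h l))) => [l ?|none].
  by exists l.
have : [set: 'I_K] \subset [set l : 'I_K | val l == p] :|: [set l : 'I_K | h l < D].
  by apply/subsetP => l _; move: (none l); rewrite !inE ltnNge /=; case: (_ == p) => //= ->.
move/subset_leq_card; rewrite cardsT card_ord => le_K.
have := leq_trans le_K (leq_trans (leq_card_setU _ _) (leq_add (card_val_le1 p) (short D))).
by rewrite add1n => /(leq_trans le_DK); rewrite ltnn.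
Qed.

End Spider.

Definition spider K n : rel 'I_n := fun u v => adj K u v.
Arguments spider : clear implicits.

Section SpiderGraph.
Variables (K n : nat).
Hypothesis K_gt0 : 0 < K.

Lemma spider_sym : symmetric (spider K n).
Proof. by move=> u v; rewrite /spider /adj orbC. Qed.

Lemma spider_irr : irreflexive (spider K n).
Proof. by move=> u; rewrite /spider /adj orbb /child; apply/negP => /andP [u_neq0 /eqP]; lia. Qed.

Lemma spider_connected : connected_graph (spider K n).
Proof.
move=> x y; have n_gt0 : 0 < n by case: x => x; lia.
pose root : 'I_n := Ordinal n_gt0.
have from_root (v : 'I_n) : connect (spider K n) root v.
  case: v => v; elim/ltn_ind: v => v IH lt_vn.
  have [v0|v_neq0] := eqVneq v 0; first by rewrite (_ : Ordinal lt_vn = root) //; apply: val_inj.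
  have lt_pn : v - K < n by lia.
  apply: connect_trans (IH (v - K) _ lt_pn) (connect1 _); first by move: v_neq0; lia.
  by rewrite /spider /adj /= child_sub.
by apply: connect_trans (from_root y); rewrite (sym_connect_sym (@spider_sym)).
Qed.

Lemma spider_acyclic : acyclic (spider K n).
Proof.
apply: (@acyclic_ranked _ _ (fun v : 'I_n => dep K v)); first exact: spider_sym.
  by move=> u v /orP [] /(child_dep K_gt0); lia.
move=> x y z /orP [/(child_dep K_gt0)|/andP [_ /eqP y_par]]; first lia.
move=> /orP [/(child_dep K_gt0)|/andP [_ /eqP z_par]]; first lia.
by move=> _ _; apply: val_inj; rewrite /= -y_par -z_par.
Qed.

Lemma spider_tree : is_tree (spider K n).
Proof.
split; [split|exact: spider_connected|exact: spider_acyclic].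
  exact: spider_sym.
exact: spider_irr.
Qed.

Lemma dist_spider (x y : 'I_n) : Defs.dist (spider K n) x y = tdist K x y.
Proof.
apply: (@dist_eq_descent _ _ (fun u v : 'I_n => tdist K u v)) => {x y} [x y|x y z|x y].
- exact: tdist_eq0.
- by case/orP=> /(tdist_child K_gt0 x) [].
move=> d_pos; have [x' adj_x' /andP [/eqP d_x' le_x']] := tdist_descent K_gt0 d_pos.
have lt_x'n : x' < n by apply: leq_ltn_trans le_x' _; rewrite gtn_max !ltn_ord.
by exists (Ordinal lt_x'n).
Qed.

End SpiderGraph.

Section Play.
Variables (K n : nat).
Hypothesis K_gt0 : 0 < K.
Variables (c1 c2 : 'I_n) (f : seq bool -> 'I_n).

Record position := Position { answers : seq bool; test : 'I_n; reach : nat -> nat }.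

(* The game at time i >= 1 when the mouse answers by [answer]; as in [state], time 0
   duplicates time 1. *)
Fixpoint play i : position :=
  match i with
  | 0 | 1 => Position [::] c1 (fun=> K)
  | (i'.+1 as j).+1 =>
      let s := play j in
      let c' := if i' == 0 then c2 else f (answers s) in
      Position (rcons (answers s) (answer K (test s) c' (reach s))) c'
               (update K (test s) c' (reach s))
  end.

Definition answer_at i := answer K (test (play i.-1)) (test (play i)) (reach (play i.-1)).

Lemma test_playS i : 0 < i -> test (play i.+1) = if i == 1 then c2 else f (answers (play i)).
Proof. by case: i => [|[|i]]. Qed.

Lemma answers_playS i : 0 < i -> answers (play i.+1) = rcons (answers (play i)) (answer_at i.+1).
Proof. by case: i => [|[|i]]. Qed.

Lemma reach_playS i : 0 < i ->
  reach (play i.+1) = update K (test (play i)) (test (play i.+1)) (reach (play i)).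
Proof. by case: i => [|[|i]]. Qed.

Lemma few_short_legs_play i : 0 < i -> few_short_legs K (reach (play i)).
Proof.
elim: i => [//|i IH] _; have [->|i_pos] := posnP i; first exact: few_short_legs_const.
by rewrite reach_playS //; apply: few_short_legs_update; exact: IH.
Qed.

Definition legal_step i (u w : 'I_n) :=
  (u = w \/ spider K n u w) /\
  (tdist K (test (play i)) w <= tdist K (test (play i.-1)) u) = answer_at i.

Lemma play_history i (w : 'I_n) : 0 < i -> reachable K (reach (play i)) w ->
  exists tm : nat -> 'I_n, tm i = w /\ forall j, 1 < j <= i -> legal_step j (tm j.-1) (tm j).
Proof.
elim: i w => [//|i IH] w _; have [->|i_pos] := posnP i.
  by exists (fun=> w); split=> // j; lia.
rewrite reach_playS // => /(reachable_back K_gt0) [u [le_u u_reach adj_u u_ans]].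
have lt_un : u < n by apply: leq_ltn_trans le_u _; rewrite gtn_max !ltn_ord.
have [tm [tm_i tm_legal]] := IH (Ordinal lt_un) i_pos u_reach.
exists (fun j => if j == i.+1 then w else tm j); split=> [|j /andP [lt1j]]; first by rewrite eqxx.
rewrite leq_eqVlt ltnS => /orP [/eqP ->|le_ji]; last first.
  by rewrite !ifN_eq; [apply: tm_legal; rewrite lt1j|lia|lia].
rewrite eqxx ifN_eq ?tm_i; last lia.
split=> //; case: adj_u => [u_w|]; [left; exact: val_inj|by right].
Qed.

Lemma consistent_mouse : exists m : nat -> 'I_n, forall j, 1 < j -> legal_step j (m j.-1) (m j).
Proof.
have n_gt0 : 0 < n by case: c1 => c; lia.
pose root : 'I_n := Ordinal n_gt0.
have walks k : exists w : nat -> 'I_n, forall j, j < k -> legal_step j.+2 (w j) (w j.+1).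
  have root_reach : reachable K (reach (play k.+1)) root by rewrite /reachable eqxx.
  have [tm [_ legal]] := play_history (ltn0Sn k) root_reach.
  by exists (fun j => tm j.+1) => j lt_jk; apply: legal; lia.
have [w legal] := @infinite_walk _ (fun j => legal_step j.+2) walks.
by exists (fun j => w j.-1) => -[|[|j]] // _; exact: legal.
Qed.

Section ConsistentMouse.
Variable m : nat -> 'I_n.
Hypothesis m_legal : forall j, 1 < j -> legal_step j (m j.-1) (m j).

Lemma state_play i : 0 < i -> state (spider K n) c1 c2 f m i = (answers (play i), test (play i)).
Proof.
elim: i => [//|i IH] _; have [->//|i_pos] := posnP i.
rewrite /= (negPf (lt0n_neq0 i_pos)) IH //= -test_playS // answers_playS //.
by rewrite !dist_spider // (m_legal (i_pos : 1 < i.+1)).2.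
Qed.

Lemma cpos_play i : 0 < i -> cpos (spider K n) c1 c2 f m i = test (play i).
Proof. by move=> i_pos; rewrite /cpos state_play. Qed.

Lemma reachable_in_Mset i (w : 'I_n) : 0 < i ->
  reachable K (reach (play i)) w -> w \in Mset (spider K n) c1 c2 f m i.
Proof.
move=> i_pos /(play_history i_pos) [tm [tm_i tm_legal]].
rewrite inE; apply/asboolP; exists tm; split=> // j j_range; have [adj_j ans_j] := tm_legal j j_range.
  by case: adj_j => [->|]; [left|right].
have [lt1j _] := andP j_range.
rewrite /bit !cpos_play ?(ltn_predRL lt1j) //; try lia.
by rewrite !dist_spider // ans_j (m_legal lt1j).2.
Qed.

End ConsistentMouse.

Lemma mouse_evades D : 0 < D -> D.+2 <= K -> D * K < n ->
  exists m, mouse_walk (spider K n) m /\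
    forall i, 0 < i -> D <= rad (spider K n) (Mset (spider K n) c1 c2 f m i).
Proof.
move=> D_pos le_DK lt_DKn; have [m m_legal] := consistent_mouse.
exists m; split=> [j /m_legal [adj_j _]|i i_pos].
  by case: adj_j => [->|]; [left|right].
apply: rad_ge => [|v]; first by rewrite card_ord; nia.
have [l /andP [l_ne D_le]] := long_leg (leg K v) (few_short_legs_play i_pos) le_DK.
have lt_wn : spot K l D < n by move: (ltn_ord l); rewrite /spot; nia.
exists (Ordinal lt_wn).
  apply: reachable_in_Mset => //.
  by rewrite /reachable /= leg_spot ?dep_spot // D_pos D_le orbT.
by rewrite dist_spider //= tdist_other_leg ?leg_spot ?dep_spot ?leq_addl // eq_sym.
Qed.

End Play.

Lemma sqrt_scale_bounds n : 144 <= n ->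
  (Nat.sqrt n %/ 12).+1 * (Nat.sqrt n %/ 12).+3 < n /\ n < (12 * (Nat.sqrt n %/ 12).+1) ^ 2.
Proof.
move=> le_n; have [sq_le lt_sq] := Nat.sqrt_spec' n.
have s_ge : 12 <= Nat.sqrt n by nia.
have := divn_eq (Nat.sqrt n) 12; have := ltn_pmod (Nat.sqrt n) (isT : 0 < 12).
have : 1 <= Nat.sqrt n %/ 12 by rewrite divn_gt0.
move: (Nat.sqrt n) (Nat.sqrt n %/ 12) (Nat.sqrt n %% 12) sq_le lt_sq s_ge => s x r.
rewrite Nat.pow_2_r; split; nia.
Qed.

Lemma sqrt_div12_lt n D r : n < (12 * D) ^ 2 -> D <= r -> (sqrt (INR n) / 12 < INR r)%R.
Proof.
move=> /ltP lt_n /leP /le_INR le_Dr.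
have lt_sqrt : (sqrt (INR n) < INR (12 * D))%R.
  rewrite -(sqrt_pow2 (INR (12 * D))); last exact: pos_INR.
  apply: sqrt_lt_1_alt; split; first exact: pos_INR.
  by rewrite -pow_INR; apply: lt_INR.
move: lt_sqrt; rewrite mult_INR (INR_IZR_INZ 12) /=; lra.
Qed.

Theorem theorem1p2 :
  exists N : nat, forall n : nat, N <= n ->
    exists e : rel 'I_n,
      is_tree e /\
      forall (c1 c2 : 'I_n) (f : seq bool -> 'I_n),
        exists m : nat -> 'I_n,
          mouse_walk e m /\
          forall i : nat, 1 <= i ->
            (sqrt (INR n) / 12 < INR (rad e (Mset e c1 c2 f m i)))%R.
Proof.
exists 144 => n le_n; have [fits covers] := sqrt_scale_bounds le_n.
set D := (Nat.sqrt n %/ 12).+1 in fits covers.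
exists (spider D.+2 n); split; first exact: spider_tree.
move=> c1 c2 f.
have [m [walk_m far]] := mouse_evades (ltn0Sn D.+1) c1 c2 f (ltn0Sn _) (leqnn _) fits.
by exists m; split=> // i /far; exact: sqrt_div12_lt covers.
Qed.
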